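(* Let $0<p\le q\le1$, let $(\mathcal M,d,0)$ be a finite pointed $q$-metric space, $0\in\mathcal N\subset\mathcal M$, $a\in\mathbb R^{\mathcal N\setminus\{0\}}$ and $T\in\mathcal T(\mathcal M)$. Then $T_{d_T}(a)=T_d(a)$ and \[\Big\|\sum_{x\in\mathcal N\setminus\{0\}}a_x\delta(x)\Big\|_{\mathcal F_p(\mathcal N_T)}\ge\Big\|\sum_{x\in\mathcal N\setminus\{0\}}a_x\delta(x)\Big\|_{\mathcal F_p(\mathcal N)}.\] In particular, if $a\in\mathbb R^{\mathcal N\setminus\{0\}}$ and $T\in\mathcal T(\mathcal M)$ satisfy $T_d(a)=1=\|\sum_{x\in\mathcal N\setminus\{0\}}a_x\delta(x)\|_{\mathcal F_p(\mathcal M)}$ and $\mathrm{amen}_p(\mathcal N,\mathcal M)=\|\sum_{x\in\mathcal N\setminus\{0\}}a_x\delta(x)\|_{\mathcal F_p(\mathcal N)}$, then \[\mathrm{amen}_p(\mathcal N,\mathcal M)\le\frac{\|\sum_{x\in\mathcal N\setminus\{0\}}a_x\delta(x)\|_{\mathcal F_p(\mathcal N_T)}}{T_{d_T}(a)}\le\mathrm{amen}_p(\mathcal N_T,\mathcal M_T).\]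
   Context: For $r\in(0,1]$, an $r$-metric space is a set with $d$ such that $d^r$ is a metric (a $q$-metric space is also a $p$-metric space for $p\le q$); pointed means a distinguished point $0$. A $p$-Banach space is a complete vector space with a $p$-norm. $\delta(x)$ is evaluation at $x$ on real functions vanishing at $0$, and $\mathcal F_p$ of a pointed $p$-metric space is the completion of $\mathrm{span}\{\delta(x)\}$ under $\|\sum a_i\delta(x_i)\|=\sup\|\sum a_if(x_i)\|_Y$ over $p$-Banach $Y$ and $1$-Lipschitz $f$ into $Y$ vanishing at $0$. For $0\in\mathcal N\subset\mathcal M$, $L_j$ is the linear map $\delta_{\mathcal N}(x)\mapsto\delta_{\mathcal M}(x)$ and $\mathrm{amen}_p(\mathcal N,\mathcal M)=\|L_j^{-1}\|$ if $L_j$ is an isomorphism onto its range ($+\infty$ otherwise). $\mathcal T(\mathcal M)$ is the set of trees on $\mathcal M$ rooted at $0$; for $x\ne0$, $\mathrm{pred}_T(x)$ is the neighbour of $x$ on the path to $0$, $e_x^T=\{\mathrm{pred}_T(x),x\}$, $V_x^T$ the vertex set of the subtree rooted at $x$. For a metric $\rho$ on $\mathcal M$ and $a$ extended by $0$ to $\mathcal M$, $T_\rho(a)=\big(\sum_{x\in\mathcal M\setminus\{0\}}|(\sum_{y\in V_x^T}a_y)\rho(e_x^T)|^p\big)^{1/p}$. $d_T$ is the $q$-metric on $\mathcal M$ given by $d_T(u,v)=(\sum_{i}d(u_i,u_{i+1})^q)^{1/q}$, where $u=u_1,\dots,u_m=v$ is the path from $u$ to $v$ in $T$; $\mathcal M_T=(\mathcal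 M,d_T,0)$ and $\mathcal N_T=(\mathcal N,d_T,0)$. *)

From HB Require Import structures.
From mathcomp Require Import all_boot all_order all_algebra.
From mathcomp Require Import boolp classical_sets reals ereal exp.
Set Implicit Arguments. Unset Strict Implicit. Unset Printing Implicit Defensive.
Import Order.TTheory GRing.Theory Num.Theory.
Local Open Scope ring_scope.

Section Defs.
Variable R : realType.

Record pBanach (p : R) := PBanach {
  pB_car : lmodType R;
  pB_norm : pB_car -> R;
  pB_ge0 : forall x, 0 <= pB_norm x;
  pB_eq0 : forall x, pB_norm x = 0 -> x = 0;
  pB_hom : forall (c : R) x, pB_norm (c *: x) = `|c| * pB_norm x;
  pB_ptri : forall x y, pB_norm (x + y) `^ p <= pB_norm x `^ p + pB_norm y `^ p;
  pB_complete : forall u : nat -> pB_car,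
    (forall eps, 0 < eps -> exists n0, forall m n, (n0 <= m)%N -> (n0 <= n)%N ->
        pB_norm (u m - u n) < eps) ->
    exists l, forall eps, 0 < eps -> exists n0, forall n, (n0 <= n)%N ->
        pB_norm (u n - l) < eps }.

Variable M : finType.

Definition is_qmetric (q : R) (d : M -> M -> R) : Prop :=
  [/\ forall x y, 0 <= d x y,
      forall x y, d x y = 0 <-> x = y,
      forall x y, d x y = d y x &
      forall x y w, d x w `^ q <= d x y `^ q + d y w `^ q].

(* Norm of  sum_{x in X} b_x delta(x)  in F_p((X, d, z)): supremum over all
   p-Banach Y and all f : X -> Y, f z = 0, 1-Lipschitz on X. *)
Definition Fnorm (p : R) (X : {set M}) (d : M -> M -> R) (z : M) (b : M -> R) : R :=
  sup (fun r : R => exists (Y : pBanach p) (f : M -> pB_car Y),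
        [/\ f z = 0,
            forall x y, x \in X -> y \in X -> pB_norm (f x - f y) <= d x y &
            r = pB_norm (\sum_(x in X) b x *: f x)]).

(* amen_p(N, M) = || L_j^{-1} || (and +oo if L_j is not an isomorphism onto
   its range), for the pointed space (M, d, z) and 0 = z in N.  Elements of
   F_p(N) are the finite sums sum_{x in N\{z}} b_x delta(x). *)
Definition amen (p : R) (N : {set M}) (d : M -> M -> R) (z : M) : \bar R :=
  ereal_sup (fun r : \bar R => r = 0%E \/ exists b : M -> R,
     (forall x, (x \notin N) || (x == z) -> b x = 0) /\
     Fnorm p N d z b != 0 /\
     r = (if Fnorm p [set: M] d z b == 0 then +oo%E
          else (Fnorm p N d z b / Fnorm p [set: M] d z b)%:E)).

Definition is_tpath (e : rel M) (u v : M) (s : seq M) : bool :=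
  [&& path e u s, last u s == v & uniq (u :: s)].

Definition is_tree (e : rel M) : Prop :=
  [/\ symmetric e, irreflexive e & forall u v, exists! s, is_tpath e u v s].

Definition tree_path (e : rel M) (u v : M) : seq M :=
  u :: xget [::] (fun s => is_tpath e u v s).

(* pred_T(x): neighbour of x on the path to the root z *)
Definition tpred (z : M) (e : rel M) (x : M) : M := nth x (tree_path e x z) 1.

(* y in V_x^T  iff  x lies on the path from y to the root *)
Definition inV (z : M) (e : rel M) (x y : M) : bool := x \in tree_path e y z.

Definition Tsum (p : R) (z : M) (e : rel M) (rho : M -> M -> R) (b : M -> R) : R :=
  (\sum_(x | x != z)
     `| (\sum_(y | inV z e x y) b y) * rho (tpred z e x) x | `^ p) `^ p^-1.

Definition dT (q : R) (d : M -> M -> R) (e : rel M) (u v : M) : R :=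
  let s := tree_path e u v in
  (\sum_(pr <- zip s (behead s)) d pr.1 pr.2 `^ q) `^ q^-1.

Definition ext0 (N : {set M}) (z : M) (a : M -> R) (x : M) : R :=
  if (x \in N) && (x != z) then a x else 0.

End Defs.

From HB Require Import structures.
From mathcomp Require Import all_boot all_order all_algebra.
From mathcomp Require Import boolp classical_sets reals ereal exp.
Import Order.TTheory GRing.Theory Num.Theory.
Local Open Scope ring_scope.

(* By the q-triangle inequality d_T dominates d, and on the tree edges
   {pred_T x, x} the two agree, so T_{d_T}(a) = T_d(a) while the larger metric
   only admits more 1-Lipschitz maps on N, raising the F_p(N_T) norm.  Abel
   summation along the tree rewrites sum_x b_x f(x) as
   sum_x (sum_{y in V_x} b_y) (f(x) - f(pred_T x)), so the p-triangle inequality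
   bounds the F_p(M_T) norm of b by T_{d_T}(b) = 1; hence the ratio of its
   F_p(N_T) and F_p(M_T) norms, a lower bound for amen_p(N_T, M_T), is at least
   its F_p(N_T) norm. *)

Section TreePaths.
Context {M : finType} {e : rel M} (He : is_tree e).

Lemma is_tpath_tree_path u v : is_tpath e u v (behead (tree_path e u v)).
Proof.
case: He => _ _ /(_ u v) [s [Hs _]].
by apply: (@xgetPex _ [::] (fun s => is_tpath e u v s)); exists s.
Qed.

Lemma tree_path_unique u v s : is_tpath e u v s -> tree_path e u v = u :: s.
Proof.
move=> Hs; case: He => _ _ /(_ u v) [s0 [_ Us0]].
by rewrite /tree_path -(Us0 _ Hs) (Us0 _ (is_tpath_tree_path u v)).
Qed.

Lemma uniq_tree_path u v : uniq (tree_path e u v).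
Proof. by case/and3P: (is_tpath_tree_path u v). Qed.

Lemma last_tree_path u v : last u (behead (tree_path e u v)) = v.
Proof. by case/and3P: (is_tpath_tree_path u v) => _ /eqP. Qed.

Lemma tree_path_id z : tree_path e z z = [:: z].
Proof. by rewrite (@tree_path_unique z z [::]) // /is_tpath /= eqxx. Qed.

Lemma tree_path_tpred z y : y != z ->
  tree_path e y z = y :: tree_path e (tpred z e y) z.
Proof.
move=> yz; have := is_tpath_tree_path y z; rewrite /tpred /tree_path /=.
case: (xget _ _) => [|w s]; first by rewrite /is_tpath /= (negbTE yz).
case/and3P=> /= /andP[_ Hp] Hl /andP[_ Hu]; congr (_ :: _).
by rewrite -/(tree_path e w z) (@tree_path_unique w z s) //; apply/and3P.
Qed.

Lemma tree_path_tpred_edge z x : x != z ->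
  tree_path e (tpred z e x) x = [:: tpred z e x; x].
Proof.
move=> xz; case: He => e_sym e_irr _.
have := is_tpath_tree_path x z; rewrite /tpred /tree_path /=.
case: (xget [::] (fun s => is_tpath e x z s)) => [|w s] /=.
  by rewrite /is_tpath /= (negbTE xz).
case/and3P=> /andP[exw _] _ _; congr (_ :: _).
rewrite -[LHS]/(behead (tree_path e w x)) (@tree_path_unique w x [:: x]) //.
rewrite /is_tpath /= e_sym exw eqxx /= andbT inE.
by apply: contraTneq exw => ->; rewrite e_irr.
Qed.

End TreePaths.

Section PowR.
Context {R : realType}.

Lemma powRVK (p x : R) : 0 < p -> 0 <= x -> (x `^ p) `^ p^-1 = x.
Proof. by move=> p0 x0; rewrite -powRrM mulfV ?gt_eqF // powRr1. Qed.

Lemma ler_powRV (p x y : R) : 0 < p -> 0 <= x -> x `^ p <= y -> x <= y `^ p^-1.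
Proof.
move=> p0 x0 xy; rewrite -(@powRVK p x) //.
apply: ge0_ler_powR => //; first by rewrite invr_ge0 ltW.
  by rewrite nnegrE powR_ge0.
by rewrite nnegrE (le_trans _ xy) ?powR_ge0.
Qed.

End PowR.

Definition zero_pBanach {R : realType} (p : R) : pBanach p.
Proof.
refine (@PBanach R p 'rV[R]_0 (fun=> 0) _ _ _ _ _) => //.
- by move=> x _; rewrite thinmx0.
- by move=> c x; rewrite mulr0.
- by move=> x y; rewrite lerDl powR_ge0.
- by move=> u _; exists 0 => eps eps0; exists 0%N.
Defined.

Section PBanach.
Context {R : realType} {p : R} {Y : pBanach p}.

Lemma pB_norm0 : pB_norm (0 : pB_car Y) = 0.
Proof. by have := @pB_hom _ _ Y 0 0; rewrite scale0r normr0 mul0r. Qed.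

Lemma pB_normB (x y : pB_car Y) : pB_norm (x - y) = pB_norm (y - x).
Proof.
have -> : x - y = (-1) *: (y - x) by rewrite scaleN1r opprB.
by rewrite pB_hom normrN normr1 mul1r.
Qed.

Lemma pB_norm_sum (I : finType) (P : pred I) (v : I -> pB_car Y) :
  0 < p -> pB_norm (\sum_(i | P i) v i) `^ p <= \sum_(i | P i) pB_norm (v i) `^ p.
Proof.
move=> p0; apply: (big_ind2 (fun u c => pB_norm u `^ p <= c)) => //.
- by rewrite pB_norm0 powR0 ?gt_eqF.
- by move=> ? ? ? ? h1 h2; apply: le_trans (pB_ptri _ _) (lerD h1 h2).
Qed.

End PBanach.

Section Fnorm.
Context {R : realType} {M : finType} {p : R}.
Hypothesis p_gt0 : 0 < p.
Implicit Types (X : {set M}) (rho : M -> M -> R) (z : M) (b : M -> R).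

Definition Fnorm_set X rho z b : set R :=
  fun r => exists (Y : pBanach p) (f : M -> pB_car Y),
    [/\ f z = 0,
        forall x y, x \in X -> y \in X -> pB_norm (f x - f y) <= rho x y &
        r = pB_norm (\sum_(x in X) b x *: f x)].

Lemma Fnorm_set0 X rho z b : (forall x y, 0 <= rho x y) -> Fnorm_set X rho z b 0.
Proof. by move=> rho0; exists (zero_pBanach p), (fun=> 0). Qed.

Lemma Fnorm_set_bounded X rho z b : z \in X -> has_ubound (Fnorm_set X rho z b).
Proof.
move=> zX; exists ((\sum_(x in X) (`|b x| * rho x z) `^ p) `^ p^-1).
move=> _ [Y [f [fz Lf ->]]]; apply: ler_powRV; rewrite ?pB_ge0 //.
apply: le_trans (pB_norm_sum _ _ _ p_gt0) (ler_sum _ _) => x xX.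
have fx_le : pB_norm (f x) <= rho x z by rewrite -[f x]subr0 -fz Lf.
have rho_ge0 : 0 <= rho x z := le_trans (pB_ge0 _) fx_le.
rewrite pB_hom; apply: (ge0_ler_powR (ltW p_gt0)).
- by rewrite nnegrE mulr_ge0 ?pB_ge0.
- by rewrite nnegrE mulr_ge0.
- by rewrite ler_wpM2l.
Qed.

Lemma Fnorm_ge0 X rho z b : z \in X -> (forall x y, 0 <= rho x y) ->
  0 <= Fnorm p X rho z b.
Proof.
by move=> zX rho0; apply: ub_le_sup; [exact: Fnorm_set_bounded | exact: Fnorm_set0].
Qed.

Lemma le_Fnorm {X} {rho1 rho2 : M -> M -> R} {z b} : z \in X ->
  (forall x y, 0 <= rho1 x y) -> (forall x y, rho1 x y <= rho2 x y) ->
  Fnorm p X rho1 z b <= Fnorm p X rho2 z b.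
Proof.
move=> zX rho10 rho12; apply: ge_sup; first by exists 0; apply: Fnorm_set0.
move=> _ [Y [f [fz Lf ->]]]; apply: ub_le_sup; first exact: Fnorm_set_bounded.
by exists Y, f; split=> // x y xX yX; apply: le_trans (Lf _ _ xX yX) (rho12 x y).
Qed.

Lemma Fnorm_le_amen {N : {set M}} {rho z b} : z \in N -> (forall x y, 0 <= rho x y) ->
  (forall x, (x \notin N) || (x == z) -> b x = 0) ->
  Fnorm p [set: M] rho z b <= 1 -> ((Fnorm p N rho z b)%:E <= amen p N rho z)%E.
Proof.
move=> zN rho0 b_supp FM_le1.
have FN_ge0 : 0 <= Fnorm p N rho z b by apply: Fnorm_ge0.
have FM_ge0 : 0 <= Fnorm p [set: M] rho z b by apply: Fnorm_ge0; rewrite ?in_setT.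
have [->|FN_neq0] := eqVneq (Fnorm p N rho z b) 0; first by apply: ereal_sup_ubound; left.
have [FM0|FM_neq0] := eqVneq (Fnorm p [set: M] rho z b) 0.
  apply: le_trans (leey _) _; apply: ereal_sup_ubound; right.
  by exists b; rewrite FM0 eqxx.
have FM_gt0 : 0 < Fnorm p [set: M] rho z b by rewrite lt_def FM_neq0.
apply: le_trans (_ : _ <= (Fnorm p N rho z b / Fnorm p [set: M] rho z b)%:E)%E _.
  by rewrite lee_fin ler_pdivlMr // ler_piMr.
by apply: ereal_sup_ubound; right; exists b; rewrite (negbTE FM_neq0).
Qed.

End Fnorm.

Section TreeMetric.
Context {R : realType} {M : finType} {q : R} {d : M -> M -> R}.
Hypotheses (q_gt0 : 0 < q) (d_qmetric : is_qmetric q d).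
Context {e : rel M} (He : is_tree e).

Lemma powR_le_path_sum u s :
  d u (last u s) `^ q <= \sum_(uv <- zip (u :: s) s) d uv.1 uv.2 `^ q.
Proof.
case: d_qmetric => _ d_eq0 _ d_tri.
elim: s u => [|w s IHs] u /=; first by rewrite big_nil (d_eq0 u u).2 // powR0 ?gt_eqF.
by rewrite big_cons (le_trans (d_tri u w _)) // lerD2l.
Qed.

Lemma le_dT u v : d u v <= dT q d e u v.
Proof.
case: d_qmetric => d_ge0 _ _ _.
apply: ler_powRV => //; rewrite /tree_path.
by have := powR_le_path_sum u (behead (tree_path e u v)); rewrite last_tree_path.
Qed.

Lemma dT_tpred z x : x != z -> dT q d e (tpred z e x) x = d (tpred z e x) x.
Proof.
move=> xz; case: d_qmetric => d_ge0 _ _ _.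
by rewrite /dT tree_path_tpred_edge //= big_cons big_nil addr0 powRVK.
Qed.

End TreeMetric.

Section AbelSummation.
Context {R : realType} {M : finType} {p : R} {e : rel M} (He : is_tree e).
Context {z : M} {Y : pBanach p} {f : M -> pB_car Y}.
Hypothesis fz : f z = 0.

Lemma sum_increments_tree_path y :
  \sum_(x | (x != z) && inV z e x y) (f x - f (tpred z e x)) = f y.
Proof.
move: {2}(size _) (leqnn (size (tree_path e y z))) => n.
elim: n y => [|n IHn] y; first by rewrite /tree_path.
have [->|yz] := eqVneq y z.
  by rewrite big_pred0 // => x; rewrite /inV tree_path_id // inE andNb.
have path_y := tree_path_tpred He _ _ yz.
have := uniq_tree_path He y z; rewrite path_y => /andP[y_notin _] size_le.
rewrite (bigD1 y) /=; last by rewrite yz /inV path_y mem_head.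
rewrite (eq_bigl (fun x => (x != z) && inV z e x (tpred z e y))) ?IHn ?subrK // => x.
rewrite /inV path_y inE; case: (eqVneq x y) => [->|_] /=; last by rewrite andbT.
by rewrite (negbTE y_notin) !andbF.
Qed.

Lemma tree_abel_summation (b : M -> R) :
  \sum_(x in [set: M]) b x *: f x =
  \sum_(x | x != z) (\sum_(y | inV z e x y) b y) *: (f x - f (tpred z e x)).
Proof.
under [RHS]eq_bigr do rewrite scaler_suml.
rewrite (exchange_big_dep xpredT) //=.
apply: eq_big => [x|y _]; first by rewrite inE.
by rewrite -scaler_sumr sum_increments_tree_path.
Qed.

Lemma pB_norm_le_Tsum (b : M -> R) (rho : M -> M -> R) : 0 < p ->
  (forall x y, pB_norm (f x - f y) <= rho x y) ->
  pB_norm (\sum_(x in [set: M]) b x *: f x) <= Tsum p z e rho b.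
Proof.
move=> p0 Lf; apply: ler_powRV; rewrite ?pB_ge0 // tree_abel_summation.
apply: le_trans (pB_norm_sum _ _ _ p0) (ler_sum _ _) => x _.
rewrite pB_hom; apply: (ge0_ler_powR (ltW p0)).
- by rewrite nnegrE mulr_ge0 ?pB_ge0.
- by rewrite nnegrE.
- by rewrite normrM ler_wpM2l // pB_normB (le_trans (Lf _ _)) ?ler_norm.
Qed.

End AbelSummation.

Lemma Fnorm_setT_le_Tsum {R : realType} {M : finType} {p : R} {e : rel M}
  {z : M} {b : M -> R} {rho : M -> M -> R} :
  is_tree e -> 0 < p -> (forall x y, 0 <= rho x y) ->
  Fnorm p [set: M] rho z b <= Tsum p z e rho b.
Proof.
move=> He p0 rho0; apply: ge_sup; first by exists 0; apply: Fnorm_set0.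
by move=> _ [Y [f [fz Lf ->]]]; apply: pB_norm_le_Tsum => // x y; apply: Lf.
Qed.

Lemma ext0_out (R : realType) (M : finType) (N : {set M}) (z : M) (a : M -> R) x :
  (x \notin N) || (x == z) -> ext0 N z a x = 0.
Proof. by rewrite /ext0 => /orP[/negbTE -> | /eqP ->] //; rewrite eqxx andbF. Qed.

Theorem lemma3p12 (R : realType) (p q : R) (M : finType) (d : M -> M -> R)
  (z : M) (N : {set M}) (a : M -> R) (e : rel M) :
  0 < p -> p <= q -> q <= 1 -> is_qmetric q d -> z \in N -> is_tree e ->
  let b := ext0 N z a in
  let dt := dT q d e in
  [/\ Tsum p z e dt b = Tsum p z e d b,
      Fnorm p N dt z b >= Fnorm p N d z b &
      (Tsum p z e d b = 1 -> Fnorm p [set: M] d z b = 1 ->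
       amen p N d z = (Fnorm p N d z b)%:E ->
       (amen p N d z <= (Fnorm p N dt z b / Tsum p z e dt b)%:E
        <= amen p N dt z)%E)].
Proof.
move=> p0 pq _ hd zN He b dt.
have q0 : 0 < q := lt_le_trans p0 pq.
have d0 : forall x y, 0 <= d x y by case: hd.
have dt0 : forall x y, 0 <= dt x y by move=> x y; apply: powR_ge0.
have TdT : Tsum p z e dt b = Tsum p z e d b.
  by congr (_ `^ _); apply: eq_bigr => x xz; rewrite /dt (dT_tpred q0 hd He).
have FdT : Fnorm p N d z b <= Fnorm p N dt z b.
  by apply: (le_Fnorm p0 zN d0) => x y; apply: (le_dT q0 hd He).
split=> // Td1 _ amenE; rewrite TdT Td1 divr1 amenE lee_fin FdT /=.
apply: (Fnorm_le_amen p0 zN dt0); first exact: ext0_out.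
by rewrite -Td1 -TdT; apply: (Fnorm_setT_le_Tsum He p0 dt0).
Qed.
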